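(* Let $\sigma_1$ and $\sigma_2$ be compositions of the positive integers $m_1$ and $m_2$ respectively. If $\Gamma(\mathsf{hypo},\sigma_1)$ and $\Gamma(\mathsf{hypo},\sigma_2)$ are isomorphic as unlabelled directed graphs, then $m_1=m_2$.
   Context: A quasi-ribbon tableau of shape $\sigma=(\sigma_1,\dots,\sigma_r)$ (a composition) is a filling with positive integers of the diagram having $\sigma_i$ cells in row $i$, the leftmost cell of row $i+1$ directly below the rightmost cell of row $i$, with entries weakly increasing along rows and strictly increasing down columns. Its column reading is the word obtained by reading columns left to right, each column bottom to top. Quasi-Kashiwara operator $f_i$ ($i\ge1$) on a word $u$ over the positive integers: undefined if $u$ contains a (not necessarily consecutive) subsequence $(i+1)\,i$ or contains no letter $i$; otherwise $f_i(u)$ replaces the rightmost $i$ by $i+1$. $\Gamma(\mathsf{hypo},\sigma)$ is the directed graph whose vertices are the quasi-ribbon tableaux of shape $\sigma$ (identified with their column readings), with an edge $u\to f_i(u)$ labelled $i$ whenever $f_i(u)$ is defined. *)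

From mathcomp Require Import all_boot.
Set Implicit Arguments. Unset Strict Implicit. Unset Printing Implicit Defensive.

Definition composition (sigma : seq nat) (m : nat) : Prop :=
  all (fun p => 0 < p) sigma /\ sumn sigma = m.

(* Column (0-based) of the leftmost cell of row i (0-based): since the
   leftmost cell of row i+1 sits directly below the rightmost cell of row i,
   c_0 = 0 and c_{i+1} = c_i + sigma_i - 1. *)
Definition row_start (sigma : seq nat) (i : nat) : nat :=
  sumn (take i sigma) - i.

(* A filling T of the diagram of shape sigma is given as its list of rows
   (top to bottom), row i being the left-to-right entries of row i. *)
Definition qrt (sigma : seq nat) (T : seq (seq nat)) : Prop :=
  [/\ size T = size sigma,
      forall i, i < size sigma -> size (nth [::] T i) = nth 0 sigma i,
      forall i, i < size sigma -> all (fun x => 0 < x) (nth [::] T i),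
      forall i, i < size sigma -> sorted leq (nth [::] T i)
    & (* strictly increasing down columns: the only vertical adjacency is
         the rightmost cell of row i above the leftmost cell of row i+1 *)
      forall i, i.+1 < size sigma ->
        last 0 (nth [::] T i) < head 0 (nth [::] T i.+1)].

Definition column_word (sigma : seq nat) (T : seq (seq nat)) (k : nat) : seq nat :=
  rev [seq nth 0 (nth [::] T i) (k - row_start sigma i)
      | i <- iota 0 (size sigma) &
        (row_start sigma i <= k) && (k < row_start sigma i + nth 0 sigma i)].

(* Column reading: columns left to right (columns beyond the width are empty). *)
Definition column_reading (sigma : seq nat) (T : seq (seq nat)) : seq nat :=
  flatten [seq column_word sigma T k | k <- iota 0 (sumn sigma)].

Definition qk_f (i : nat) (u : seq nat) : option (seq nat) :=
  if subseq [:: i.+1; i] u || (i \notin u) then None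
  else Some (set_nth 0 u (size u - (index i (rev u)).+1) i.+1).

Definition hypo_vertex (sigma : seq nat) (w : seq nat) : Prop :=
  exists T, qrt sigma T /\ column_reading sigma T = w.

Definition hypo_edge (sigma : seq nat) (u v : seq nat) : Prop :=
  hypo_vertex sigma u /\ hypo_vertex sigma v /\
  exists i, 0 < i /\ qk_f i u = Some v.

Definition hypo_graph_iso (s1 s2 : seq nat) : Prop :=
  exists (phi psi : seq nat -> seq nat),
    [/\ forall u, hypo_vertex s1 u -> hypo_vertex s2 (phi u),
        forall v, hypo_vertex s2 v -> hypo_vertex s1 (psi v),
        forall u, hypo_vertex s1 u -> psi (phi u) = u,
        forall v, hypo_vertex s2 v -> phi (psi v) = v
      & forall u v, hypo_vertex s1 u -> hypo_vertex s1 v ->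
          (hypo_edge s1 u v <-> hypo_edge s2 (phi u) (phi v))].

Example ex_cr : column_reading [:: 2; 2] [:: [:: 1; 2]; [:: 3; 3]] = [:: 1; 3; 2; 3].
Proof. by []. Qed.
Example ex_f : qk_f 1 [:: 1; 2; 1] = None /\ qk_f 1 [:: 1; 1; 2] = Some [:: 1; 2; 2].
Proof. by []. Qed.

(** The integer m is the maximum out-degree of Γ(hypo, σ), which is an
    isomorphism invariant. Every vertex is a word of length m, and f_i can
    only act on a word containing the letter i, so no vertex has more than m
    successors. Conversely, fill the diagram with distinct even entries whose
    gaps along rows and between consecutive rows are at least 2: raising any
    single entry x to x+1 leaves a quasi-ribbon tableau, f_x is defined
    because the odd letter x+1 does not occur, and the m words obtained are
    pairwise distinct. *)
From mathcomp Require Import all_boot zify.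
Set Implicit Arguments. Unset Strict Implicit. Unset Printing Implicit Defensive.

Definition in_column (s : seq nat) (k i : nat) : bool :=
  (row_start s i <= k) && (k < row_start s i + nth 0 s i).

(* A cell is the pair (column, row). *)
Definition reading_cells (s : seq nat) : seq (nat * nat) :=
  [seq (k, i) | k <- iota 0 (sumn s),
                i <- rev [seq i <- iota 0 (size s) | in_column s k i]].

Lemma column_reading_cells s T : column_reading s T =
  [seq nth 0 (nth [::] T c.2) (c.1 - row_start s c.2) | c <- reading_cells s].
Proof.
rewrite /column_reading /reading_cells map_flatten -map_comp.
congr flatten; apply: eq_map => k /=.
by rewrite /column_word !map_rev -map_comp.
Qed.

Lemma mem_reading_cells s c : c \in reading_cells s ->
  [/\ c.2 < size s, row_start s c.2 <= c.1 & c.1 < row_start s c.2 + nth 0 s c.2].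
Proof.
case/allpairsPdep => k [i [_ + ->]] /=.
by rewrite mem_rev mem_filter mem_iota => /andP [/andP [-> ->] /andP [_ ->]].
Qed.

Lemma reading_cells_uniq s : uniq (reading_cells s).
Proof.
apply: allpairs_uniq_dep => [|k _|[a b] [c d] _ _ /= [-> ->]] //.
- exact: iota_uniq.
- by rewrite rev_uniq filter_uniq // iota_uniq.
Qed.

Lemma count_iota_interval a b n :
  count (fun k => (a <= k) && (k < a + b)) (iota 0 n) = minn n (a + b) - minn n a.
Proof.
elim: n => [|n IHn]; first by rewrite !min0n.
rewrite -addn1 iotaD count_cat IHn /= add0n addn0.
by case: (boolP ((a <= n) && (n < a + b))) => /=; lia.
Qed.

Lemma sumn_take_nth_le s i : i < size s -> sumn (take i s) + nth 0 s i <= sumn s.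
Proof.
move=> lt_i; rewrite -sumn_rcons -(take_nth 0 lt_i).
by rewrite -{2}(cat_take_drop i.+1 s) sumn_cat leq_addr.
Qed.

(* Counting cells column by column and row by row. *)
Lemma size_reading_cells s : size (reading_cells s) = sumn s.
Proof.
rewrite size_allpairs_dep.
have -> : [seq size (rev [seq i <- iota 0 (size s) | in_column s k i])
          | k <- iota 0 (sumn s)] =
          [seq \sum_(i <- iota 0 (size s)) in_column s k i | k <- iota 0 (sumn s)].
  apply: eq_map => k; rewrite size_rev size_filter -sum1_count big_mkcond /=.
  by apply: eq_bigr => i _; case: in_column.
rewrite sumnE big_map exchange_big /=.
rewrite -[in RHS](mkseq_nth 0 s) [RHS]sumnE big_map.
apply: eq_big_seq => i; rewrite mem_iota add0n => /= lt_i.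
rewrite -big_mkcond /= sum1_count /in_column count_iota_interval.
by have := sumn_take_nth_le lt_i; rewrite /row_start; lia.
Qed.

Lemma size_column_reading s T : size (column_reading s T) = sumn s.
Proof. by rewrite column_reading_cells size_map size_reading_cells. Qed.

Definition fill (s : seq nat) (g : nat -> nat -> nat) : seq (seq nat) :=
  [seq [seq g i j | j <- iota 0 (nth 0 s i)] | i <- iota 0 (size s)].

Lemma nth_fill s g i : i < size s ->
  nth [::] (fill s g) i = [seq g i j | j <- iota 0 (nth 0 s i)].
Proof. by move=> lt_i; rewrite /fill (nth_map 0) ?size_iota // nth_iota. Qed.

Lemma qrt_fill s g : all (fun p => 0 < p) s ->
  (forall i j, 0 < g i j) ->
  (forall i j j', j <= j' -> g i j <= g i j') ->
  (forall i, i.+1 < size s -> g i (nth 0 s i).-1 < g i.+1 0) ->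
  qrt s (fill s g).
Proof.
move=> s_pos g_pos g_mono g_step.
have s_pos_at k : k < size s -> 0 < nth 0 s k by move=> ?; apply: (allP s_pos); rewrite mem_nth.
split=> [|i lt_i|i lt_i|i lt_i|i lt_i1].
- by rewrite size_map size_iota.
- by rewrite nth_fill // size_map size_iota.
- by rewrite nth_fill //; apply/allP => x /mapP [j _ ->].
- rewrite nth_fill // sorted_map.
  by apply: (sub_sorted _ (iota_sorted 0 _)) => a b /= /g_mono.
- have lt_i := ltnW lt_i1; rewrite !nth_fill //.
  have := g_step i lt_i1.
  case: (nth 0 s i) (s_pos_at i lt_i) => [|n1] // _.
  case: (nth 0 s i.+1) (s_pos_at i.+1 lt_i1) => [|n2] // _.
  by rewrite -nth_last size_map size_iota (nth_map 0) ?size_iota // nth_iota.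
Qed.

Lemma column_reading_fill s g : column_reading s (fill s g) =
  [seq g c.2 (c.1 - row_start s c.2) | c <- reading_cells s].
Proof.
rewrite column_reading_cells; apply/eq_in_map => -[k i] /mem_reading_cells /= [lt_i le_k lt_k].
rewrite nth_fill // (nth_map 0) ?size_iota ?nth_iota //; lia.
Qed.

Lemma qk_f_letter i u v : qk_f i u = Some v -> i \in u.
Proof. by rewrite /qk_f; case: (i \in u); rewrite ?orbT. Qed.

Lemma qk_f_successors_size u vs : uniq vs ->
  (forall v, v \in vs -> exists i, qk_f i u = Some v) -> size vs <= size u.
Proof.
move=> uniq_vs vs_succ.
rewrite -(size_map (fun i => odflt [::] (qk_f i u)) u).
apply: uniq_leq_size => // v /vs_succ [i f_i_u].
by apply/mapP; exists i; [exact: qk_f_letter f_i_u | rewrite f_i_u].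
Qed.

Definition raise_letter (x y : nat) : nat := if y == x then x.+1 else y.

Lemma set_nth_succ_uniq (u : seq nat) n : uniq u -> n < size u ->
  set_nth 0 u n (nth 0 u n).+1 = map (raise_letter (nth 0 u n)) u.
Proof.
move=> uniq_u lt_n; apply: (@eq_from_nth _ 0) => [|k].
  by rewrite size_set_nth size_map; apply/maxn_idPr.
rewrite size_set_nth (maxn_idPr lt_n) => lt_k.
by rewrite nth_set_nth (nth_map 0) //= /raise_letter nth_uniq // eq_sym; case: eqP.
Qed.

(* By uniqueness, the rightmost x is the only one. *)
Lemma qk_f_uniq u x : uniq u -> x \in u -> x.+1 \notin u ->
  qk_f x u = Some (map (raise_letter x) u).
Proof.
move=> uniq_u x_u x1_u.
have no_pattern : ~~ subseq [:: x.+1; x] u.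
  by apply: contra x1_u => /mem_subseq; apply; rewrite inE eqxx.
rewrite /qk_f x_u orbF (negbTE no_pattern); congr Some.
set r := index x (rev u).
have lt_r : r < size u by rewrite -size_rev index_mem mem_rev.
have nth_x : nth 0 u (size u - r.+1) = x by rewrite -nth_rev // nth_index ?mem_rev.
by rewrite -{1 2}nth_x set_nth_succ_uniq // ltn_subrL (leq_ltn_trans (leq0n r) lt_r).
Qed.

Lemma raise_letter_inj u : (forall x, x \in u -> x.+1 \notin u) ->
  {in u &, injective (fun x => map (raise_letter x) u)}.
Proof.
move=> gaps x y x_u y_u eq_xy.
have : x.+1 \in map (raise_letter x) u by apply/mapP; exists x; rewrite /raise_letter ?eqxx.
rewrite eq_xy => /mapP [z z_u]; rewrite /raise_letter; case: eqP => [_ [] // | _ eq_z].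
by have := gaps x x_u; rewrite eq_z z_u.
Qed.

Definition successors_at_least (s : seq nat) (u : seq nat) (n : nat) : Prop :=
  exists vs, [/\ size vs = n, uniq vs & forall v, v \in vs -> hypo_edge s u v].

Lemma successors_at_least_leq_sumn s u n :
  hypo_vertex s u -> successors_at_least s u n -> n <= sumn s.
Proof.
move=> [T [_ <-]] [vs [<- uniq_vs vs_succ]].
rewrite -(size_column_reading s T); apply: qk_f_successors_size => // v /vs_succ.
by case=> _ [_ [i [_ f_i]]]; exists i.
Qed.

Section SparseTableau.

Variable s : seq nat.
Hypothesis s_pos : all (fun p => 0 < p) s.

(* Since every row has at most m cells, the entries are even, pairwise
   distinct, and at distance at least 2 from each other. *)
Definition sparse_entry (i j : nat) : nat := (i * sumn s + j).+1.*2.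

Definition sparse_reading : seq nat :=
  column_reading s (fill s sparse_entry).

Lemma qrt_fill_sparse f :
  {homo f : y y' / y <= y'} -> (forall y y', y.+2 <= y' -> f y < f y') ->
  (forall y, y <= f y) -> qrt s (fill s (fun i j => f (sparse_entry i j))).
Proof.
move=> f_mono f_gap f_ge; apply: qrt_fill => //.
- by move=> i j; apply: leq_trans (f_ge _); rewrite /sparse_entry; lia.
- by move=> i j j' le_j; apply: f_mono; rewrite /sparse_entry; lia.
- move=> i lt_i1; apply: f_gap.
  have : 0 < nth 0 s i by apply: (allP s_pos); rewrite mem_nth // ltnW.
  have := sumn_take_nth_le (ltnW lt_i1); rewrite /sparse_entry mulSn; lia.
Qed.

Lemma sparse_reading_vertex : hypo_vertex s sparse_reading.
Proof.
exists (fill s (fun i j => id (sparse_entry i j))); split => //.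
by apply: (@qrt_fill_sparse id) => // y y' /ltnW.
Qed.

Lemma raise_sparse_reading_vertex x :
  hypo_vertex s (map (raise_letter x) sparse_reading).
Proof.
exists (fill s (fun i j => raise_letter x (sparse_entry i j))); split.
  by apply: qrt_fill_sparse => [y y'|y y'|y]; rewrite /raise_letter;
     repeat case: eqP; lia.
by rewrite /sparse_reading !column_reading_fill -map_comp.
Qed.

Lemma mem_sparse_reading x : x \in sparse_reading -> exists n, x = n.+1.*2.
Proof. by rewrite /sparse_reading column_reading_fill => /mapP [c _ ->]; eexists. Qed.

Lemma sparse_reading_uniq : uniq sparse_reading.
Proof.
rewrite /sparse_reading column_reading_fill map_inj_in_uniq ?reading_cells_uniq //.
move=> [k i] [k' i'] /mem_reading_cells /= [lt_i le_k lt_k]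
  /mem_reading_cells /= [lt_i' le_k' lt_k'].
rewrite /sparse_entry => /double_inj [eq_code].
have := sumn_take_nth_le lt_i; have := sumn_take_nth_le lt_i'.
rewrite /row_start in eq_code le_k lt_k le_k' lt_k' * => bound' bound.
have := congr1 (edivn ^~ (sumn s)) eq_code.
by rewrite !edivn_eq; [case=> eq_i eq_j; subst i'; congr pair; lia | lia | lia].
Qed.

Lemma sparse_reading_successors :
  successors_at_least s sparse_reading (sumn s).
Proof.
have gaps x : x \in sparse_reading -> x.+1 \notin sparse_reading.
  move=> /mem_sparse_reading [n ->]; apply/negP => /mem_sparse_reading [n' eq_n'].
  by have := congr1 odd eq_n'; rewrite /= !odd_double.
exists [seq map (raise_letter x) sparse_reading | x <- sparse_reading]; split.
- by rewrite size_map size_column_reading.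
- by rewrite map_inj_in_uniq ?sparse_reading_uniq //; apply: raise_letter_inj.
- move=> _ /mapP [x x_u ->].
  split; first exact: sparse_reading_vertex.
  split; first exact: raise_sparse_reading_vertex.
  exists x; split; last by rewrite qk_f_uniq ?sparse_reading_uniq ?gaps.
  by have [n ->] := mem_sparse_reading x_u.
Qed.

End SparseTableau.

Lemma hypo_graph_iso_sym s1 s2 : hypo_graph_iso s1 s2 -> hypo_graph_iso s2 s1.
Proof.
move=> [phi [psi [phiV psiV psiK phiK edgeE]]].
exists psi, phi; split=> // u v uV vV.
have := edgeE _ _ (psiV _ uV) (psiV _ vV).
by rewrite !phiK //; apply: iff_sym.
Qed.

Lemma hypo_graph_iso_successors s1 s2 u n :
  hypo_graph_iso s1 s2 -> hypo_vertex s1 u -> successors_at_least s1 u n ->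
  exists2 u', hypo_vertex s2 u' & successors_at_least s2 u' n.
Proof.
move=> [phi [psi [phiV _ psiK _ edgeE]]] uV [vs [<- uniq_vs vs_succ]].
have vsV v : v \in vs -> hypo_vertex s1 v by move=> /vs_succ [_ []].
exists (phi u); first exact: phiV.
exists (map phi vs); split.
- by rewrite size_map.
- rewrite map_inj_in_uniq // => v w v_vs w_vs eq_vw.
  by rewrite -(psiK v (vsV v v_vs)) eq_vw psiK //; apply: vsV.
- move=> _ /mapP [v v_vs ->].
  exact: (edgeE u v uV (vsV v v_vs)).1 (vs_succ v v_vs).
Qed.

Lemma hypo_graph_iso_sumn_le s1 s2 :
  all (fun p => 0 < p) s1 -> hypo_graph_iso s1 s2 -> sumn s1 <= sumn s2.
Proof.
move=> s1_pos iso.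
have [u uV u_succ] := hypo_graph_iso_successors iso
  (sparse_reading_vertex s1_pos) (sparse_reading_successors s1_pos).
exact: successors_at_least_leq_sumn uV u_succ.
Qed.

Theorem corollary4p4 (m1 m2 : nat) (sigma1 sigma2 : seq nat) :
  0 < m1 -> 0 < m2 ->
  composition sigma1 m1 -> composition sigma2 m2 ->
  hypo_graph_iso sigma1 sigma2 ->
  m1 = m2.
Proof.
move=> _ _ [pos1 <-] [pos2 <-] iso.
apply/eqP; rewrite eqn_leq.
by rewrite !hypo_graph_iso_sumn_le //; apply: hypo_graph_iso_sym.
Qed.
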